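(* Let $N\ge1$. The group $H'_{\mathbb{Z}/N\mathbb{Z}}=\bar\Gamma(2)/\Phi''_N$ has exponent $N$; in other words, for every $\gamma\in\bar\Gamma(2)$, one has $\gamma^N\in\Phi''_N$.
   Context: Let $\bar\Gamma(2)=\Gamma(2)/\{\pm1\}\subset\mathrm{PSL}_2(\mathbb{Z})$, freely generated by the classes $A$ of $\begin{pmatrix}1&2\\0&1\end{pmatrix}$ and $B$ of $\begin{pmatrix}1&0\\2&1\end{pmatrix}$; $C=ABA^{-1}B^{-1}$. Set $N'=N$ if $N$ is odd and $N'=N/2$ if $N$ even; set $N''=N'$ if $N$ is prime to $3$ and $N''=N'/3$ otherwise. $\Phi_N$ is the kernel of $\bar\Gamma(2)\to(\mathbb{Z}/N\mathbb{Z})^2$, $A\mapsto(1,0)$, $B\mapsto(0,1)$. Let $\bar\psi:\Phi_N\to(\mathbb{Z}/N'\mathbb{Z})^3$ be the group homomorphism which vanishes on $A^N$ and $B^N$ and satisfies $\bar\psi(A^iB^jC^kB^{-j}A^{-i})=(-ik,-jk,k)$ for all $i,j,k\in\mathbb{Z}$. Then $\Phi''_N$ is the kernel of the composition of $\bar\psi$ with the map $(\mathbb{Z}/N'\mathbb{Z})^3\to(\mathbb{Z}/N''\mathbb{Z})^2\times\mathbb{Z}/N'\mathbb{Z}$ reducing the first two coordinates modulo $N''$; it is a normal subgroup of $\bar\Gamma(2)$. *)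

From HB Require Import structures.
From mathcomp Require Import all_boot all_order all_algebra.
Set Implicit Arguments. Unset Strict Implicit. Unset Printing Implicit Defensive.
Import Order.TTheory GRing.Theory Num.Theory.
Local Open Scope ring_scope.

(* Gamma(2) is realized as a set of 2x2 integer matrices (in the unit ring
   'M[int]_2); \bar\Gamma(2) = Gamma(2)/{±1} is handled by requiring all maps
   defined on it to be invariant under M |-> -M. *)

Definition mxA : 'M[int]_2 := \matrix_(i < 2, j < 2)
  (if (val i == 0%N) && (val j == 1%N) then 2 else (i == j)%:Z).
Definition mxB : 'M[int]_2 := \matrix_(i < 2, j < 2)
  (if (val i == 1%N) && (val j == 0%N) then 2 else (i == j)%:Z).
Definition mxC : 'M[int]_2 := mxA * mxB * mxA^-1 * mxB^-1.

Definition inGamma2 (M : 'M[int]_2) : bool :=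
  (\det M == 1) && [forall i, forall j, (2 %| M i j - (i == j)%:Z)%Z].

Definition Nprime (N : nat) : nat := if odd N then N else N./2.
Definition Nsecond (N : nat) : nat :=
  if coprime N 3 then Nprime N else (Nprime N %/ 3)%N.

Definition eqmod (m : nat) (a b : int) : Prop := (a = b %[mod m%:Z])%Z.

(* phi : \bar\Gamma(2) -> (Z/NZ)^2, represented with integer lifts:
   a homomorphism modulo N, invariant under sign, A |-> (1,0), B |-> (0,1). *)
Definition is_phi (N : nat) (phi : 'M[int]_2 -> int * int) : Prop :=
  [/\ forall x y, inGamma2 x -> inGamma2 y ->
        eqmod N (phi (x * y)).1 ((phi x).1 + (phi y).1) /\
        eqmod N (phi (x * y)).2 ((phi x).2 + (phi y).2),
      forall x, inGamma2 x ->
        eqmod N (phi (- x)).1 (phi x).1 /\ eqmod N (phi (- x)).2 (phi x).2,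
      eqmod N (phi mxA).1 1 /\ eqmod N (phi mxA).2 0 &
      eqmod N (phi mxB).1 0 /\ eqmod N (phi mxB).2 1].

Definition inPhi (N : nat) (phi : 'M[int]_2 -> int * int) (x : 'M[int]_2) : Prop :=
  inGamma2 x /\ eqmod N (phi x).1 0 /\ eqmod N (phi x).2 0.

Definition eqmod3 (m : nat) (u v : int * int * int) : Prop :=
  [/\ eqmod m u.1.1 v.1.1, eqmod m u.1.2 v.1.2 & eqmod m u.2 v.2].

Definition is_psibar (N : nat) (phi : 'M[int]_2 -> int * int)
    (psi : 'M[int]_2 -> int * int * int) : Prop :=
  let N' := Nprime N in
  [/\ forall x y, inPhi N phi x -> inPhi N phi y ->
        eqmod3 N' (psi (x * y))
          ((psi x).1.1 + (psi y).1.1, (psi x).1.2 + (psi y).1.2,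
           (psi x).2 + (psi y).2),
      forall x, inPhi N phi x -> eqmod3 N' (psi (- x)) (psi x),
      eqmod3 N' (psi (mxA ^+ N)) (0, 0, 0),
      eqmod3 N' (psi (mxB ^+ N)) (0, 0, 0) &
      forall i j k : int,
        eqmod3 N' (psi (mxA ^ i * mxB ^ j * mxC ^ k * mxB ^ (- j) * mxA ^ (- i)))
          (- (i * k), - (j * k), k)].

Definition inPhi2 (N : nat) (phi : 'M[int]_2 -> int * int)
    (psi : 'M[int]_2 -> int * int * int) (x : 'M[int]_2) : Prop :=
  [/\ inPhi N phi x, eqmod (Nsecond N) (psi x).1.1 0,
      eqmod (Nsecond N) (psi x).1.2 0 & eqmod (Nprime N) (psi x).2 0].

From HB Require Import structures.
From mathcomp Require Import all_boot all_order all_algebra.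
From mathcomp Require Import zify ring.
Import Order.TTheory GRing.Theory Num.Theory.
Local Open Scope ring_scope.
Set Implicit Arguments. Unset Strict Implicit. Unset Printing Implicit Defensive.

(* By Sanov's theorem every element of Gamma(2) is, up to sign, a word w in
   A^(+-1), B^(+-1), so it suffices to treat w^N.  Any word can be put in the
   form h A^a B^b with h in Phi_N, where h is a product of conjugates
   A^i B^j C^(+-1) B^-j A^-i, on which psibar is prescribed.  The exponents a, b
   and a lift of psibar(h) are polynomial statistics of w, multiplicative for an
   explicit polynomial law on Z^7; its N-th powers have a, b divisible by N and
   psibar-coordinates of the form N x + C(N,2) y + C(N,3) z (without the last
   term for the third coordinate).  As N' divides N and C(N,2), N'' divides
   C(N,3), and A^(N a), B^(N b) lie in the kernel of psibar, gamma^N lies in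
   Phi''_N. *)

Lemma eqmodE m a b : eqmod m a b <-> exists k, a = b + k * m%:Z.
Proof.
rewrite /eqmod; split=> [/eqP | [k ->]].
  by rewrite eqz_mod_dvd => /dvdzP[k mab]; exists k; rewrite -mab; ring.
by apply/eqP; rewrite eqz_mod_dvd; apply/dvdzP; exists k; ring.
Qed.

Lemma eqmodD m a a' b b' : eqmod m a a' -> eqmod m b b' -> eqmod m (a + b) (a' + b').
Proof. by rewrite /eqmod => ea eb; rewrite -modzDm ea eb modzDm. Qed.

Lemma eqmodN m a a' : eqmod m a a' -> eqmod m (- a) (- a').
Proof. by rewrite /eqmod => ea; rewrite -modzNm ea modzNm. Qed.

Lemma eqmodMl m c a a' : eqmod m a a' -> eqmod m (c * a) (c * a').
Proof. by rewrite /eqmod => ea; rewrite -modzMmr ea modzMmr. Qed.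

Lemma eqmod_mull m k : eqmod m (m%:Z * k) 0.
Proof. by rewrite /eqmod modzMr mod0z. Qed.

Lemma eqmod0 m a : (m%:Z %| a)%Z -> eqmod m a 0.
Proof. by move/dvdz_mod0P; rewrite /eqmod mod0z. Qed.

Lemma eqmod_dvd d m a b : (d %| m)%N -> eqmod m a b -> eqmod d a b.
Proof.
by move=> /dvdnP[q ->] /eqmodE[k ->]; apply/eqmodE; exists (k * q%:Z); rewrite PoszM; ring.
Qed.

Definition unit_subgroup (R : unitRingType) (S : R -> Prop) :=
  [/\ S 1, forall x y, S x -> S y -> S (x * y), forall x, S x -> S x^-1
    & forall x, S x -> x \is a GRing.unit].

Definition hom_mod (R : unitRingType) (S : R -> Prop) m (f : R -> int) :=
  forall x y, S x -> S y -> eqmod m (f (x * y)) (f x + f y).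

Lemma unit_subgroupX (R : unitRingType) (S : R -> Prop) x n :
  unit_subgroup S -> S x -> S (x ^+ n).
Proof. by case=> S1 SM _ _ Sx; elim: n => [|n IHn]; rewrite ?expr0 // exprS; apply: SM. Qed.

Lemma unit_subgroup_expz (R : unitRingType) (S : R -> Prop) x k :
  unit_subgroup S -> S x -> S (x ^ k).
Proof.
move=> S_group Sx; case: k => n; first exact: unit_subgroupX.
by case: (S_group) => _ _ SV _; apply: SV; apply: unit_subgroupX.
Qed.

Section HomMod.
Variables (R : unitRingType) (S : R -> Prop) (m : nat) (f : R -> int).
Hypotheses (S_group : unit_subgroup S) (f_hom : hom_mod S m f).

Lemma hom_mod1 : eqmod m (f 1) 0.
Proof.
case: S_group => S1 _ _ _; have /eqmodE[k] := f_hom S1 S1; rewrite mulr1 => f11.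
by apply/eqmodE; exists (- k); lia.
Qed.

Lemma hom_modV x : S x -> eqmod m (f x^-1) (- f x).
Proof.
case: S_group => _ _ SV S_unit Sx; have /eqmodE[k fxV] := f_hom Sx (SV x Sx).
have /eqmodE[k1 f1] := hom_mod1.
by rewrite mulrV ?S_unit // in fxV; apply/eqmodE; exists (k1 - k); lia.
Qed.

Lemma hom_mod_expz x k : S x -> eqmod m (f (x ^ k)) (k * f x).
Proof.
move=> Sx.
have fexpn n : eqmod m (f (x ^+ n)) (n%:Z * f x).
  elim: n => [|n /eqmodE[j fxn]]; first by rewrite expr0 mul0r; apply: hom_mod1.
  have /eqmodE[k' fxSn] := f_hom Sx (unit_subgroupX n S_group Sx).
  by apply/eqmodE; exists (j + k'); rewrite exprS intS; lia.
case: k => n; first exact: fexpn.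
have /eqmodE[j fxn] := fexpn n.+1.
have /eqmodE[k' fxnV] := hom_modV (unit_subgroupX n.+1 S_group Sx).
by apply/eqmodE; exists (k' - j); rewrite NegzE -exprnN; lia.
Qed.

Lemma hom_modJ g x : S g -> S x -> eqmod m (f (g * x * g^-1)) (f x).
Proof.
case: S_group => _ SM SV _ Sg Sx; have /eqmodE[k1 e1] := f_hom (SM _ _ Sg Sx) (SV _ Sg).
have /eqmodE[k2 e2] := f_hom Sg Sx; have /eqmodE[k3 e3] := hom_modV Sg.
by apply/eqmodE; exists (k1 + k2 + k3); lia.
Qed.

Lemma hom_mod_commutator x y : S x -> S y -> eqmod m (f (x * y * x^-1 * y^-1)) 0.
Proof.
case: S_group => _ SM SV _ Sx Sy.
have /eqmodE[k1 e1] := f_hom (SM _ _ (SM _ _ Sx Sy) (SV _ Sx)) (SV _ Sy).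
have /eqmodE[k2 e2] := hom_modJ Sx Sy; have /eqmodE[k3 e3] := hom_modV Sy.
by apply/eqmodE; exists (k1 + k2 + k3); lia.
Qed.

Lemma hom_mod_kerM x y : S x -> S y -> eqmod m (f x) 0 -> eqmod m (f y) 0 -> eqmod m (f (x * y)) 0.
Proof. by move=> Sx Sy fx fy; rewrite /eqmod (f_hom Sx Sy) (eqmodD fx fy) addr0. Qed.

Lemma hom_mod_kerV x : S x -> eqmod m (f x) 0 -> eqmod m (f x^-1) 0.
Proof. by move=> Sx fx; rewrite /eqmod (hom_modV Sx) (eqmodN fx) oppr0. Qed.

End HomMod.

Section Moduli.
Variable N : nat.
Local Notation N' := (Nprime N).
Local Notation N'' := (Nsecond N).

Lemma Nprime_dvd : (N' %| N)%N.
Proof.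
rewrite /Nprime; case: ifP => // /negbT/even_halfK {2}<-.
by rewrite -muln2 dvdn_mulr.
Qed.

Lemma dvd3_Nprime : (3 %| N)%N -> (3 %| N')%N.
Proof.
rewrite /Nprime; case: ifP => // /negbT/even_halfK {1}<-.
by rewrite -muln2 Gauss_dvdl.
Qed.

Lemma dvd3E : (3 %| N)%N = ~~ coprime N 3.
Proof. by rewrite coprime_sym prime_coprime ?negbK. Qed.

Lemma Nsecond_dvd : (N'' %| N')%N.
Proof. by rewrite /Nsecond; case: ifP => // /negbT; rewrite -dvd3E => /dvd3_Nprime/dvdn_div. Qed.

Lemma Nprime_dvd_bin2 : (N' %| 'C(N, 2))%N.
Proof.
have e2 : (N * N.-1 = 2 * 'C(N, 2))%N by rewrite -mul_bin_diag bin1.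
rewrite /Nprime; case: ifP => [oddN | /negbT evenN].
  by rewrite -(@Gauss_dvdr _ 2) ?coprimen2 // -e2 dvdn_mulr.
by rewrite -(@dvdn_pmul2l 2) // -e2 mul2n even_halfK // dvdn_mulr.
Qed.

Lemma Nsecond_dvdN : (N'' %| N)%N.
Proof. exact: dvdn_trans Nsecond_dvd Nprime_dvd. Qed.

Lemma Nsecond_dvd_bin2 : (N'' %| 'C(N, 2))%N.
Proof. exact: dvdn_trans Nsecond_dvd Nprime_dvd_bin2. Qed.

Lemma Nsecond_dvd_bin3 : (N'' %| 'C(N, 3))%N.
Proof.
have e3 : (3 * 'C(N, 3) = 'C(N, 2) * (N - 2))%N.
  by rewrite -mul_bin_diag mul_bin_down mulnC.
have : (N' %| 3 * 'C(N, 3))%N by rewrite e3 dvdn_mulr // Nprime_dvd_bin2.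
rewrite /Nsecond; case: ifP => [coN3 | /negbT].
  by rewrite Gauss_dvdr // (coprime_dvdl Nprime_dvd).
rewrite -dvd3E => /dvd3_Nprime/divnK {1}<-.
by rewrite mulnC dvdn_pmul2l.
Qed.

End Moduli.

Lemma dvdz_bin2_comb d n (x y : int) : (d %| n)%N -> (d %| 'C(n, 2))%N ->
  (d%:Z %| n%:Z * x + 'C(n, 2)%:Z * y)%Z.
Proof. by move=> dn d2; apply: rpredD; apply: dvdz_mulr; rewrite dvdzE. Qed.

Lemma dvdz_bin3_comb d n (x y z : int) : (d %| n)%N -> (d %| 'C(n, 2))%N -> (d %| 'C(n, 3))%N ->
  (d%:Z %| n%:Z * x + 'C(n, 2)%:Z * y + 'C(n, 3)%:Z * z)%Z.
Proof.
by move=> dn d2 d3; apply: rpredD; [apply: dvdz_bin2_comb | apply: dvdz_mulr; rewrite dvdzE].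
Qed.

Section Matrix22.
Variable R : comUnitRingType.

Definition mx22 (a b c d : R) : 'M[R]_2 :=
  \matrix_(i < 2, j < 2) if val i == 0%N then (if val j == 0%N then a else b)
                         else (if val j == 0%N then c else d).

Lemma mx22_eta (M : 'M[R]_2) :
  M = mx22 (M ord0 ord0) (M ord0 ord_max) (M ord_max ord0) (M ord_max ord_max).
Proof.
apply/matrixP=> i j; rewrite !mxE.
by case: i => [[|[|i]] Hi] //; case: j => [[|[|j]] Hj] //=; congr (M _ _); apply: val_inj.
Qed.

Lemma eq_mx22 (M : 'M[R]_2) a b c d :
    M ord0 ord0 = a -> M ord0 ord_max = b -> M ord_max ord0 = c -> M ord_max ord_max = d ->
  M = mx22 a b c d.
Proof. by move=> <- <- <- <-; apply: mx22_eta. Qed.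

Lemma mul_mx22 a b c d a' b' c' d' :
  mx22 a b c d * mx22 a' b' c' d' =
  mx22 (a * a' + b * c') (a * b' + b * d') (c * a' + d * c') (c * b' + d * d').
Proof. by apply: eq_mx22; rewrite !mxE !big_ord_recl big_ord0 !mxE /= addr0. Qed.

Lemma mx22_1 : mx22 1 0 0 1 = 1.
Proof. by apply/esym/eq_mx22; rewrite mxE. Qed.

Lemma opp_mx22 a b c d : - mx22 a b c d = mx22 (- a) (- b) (- c) (- d).
Proof. by apply: eq_mx22; rewrite !mxE. Qed.

Lemma det_mx22 a b c d : \det (mx22 a b c d) = a * d - b * c.
Proof.
rewrite (expand_det_row _ ord0) !big_ord_recl big_ord0 /cofactor !mxE /=.
by rewrite !det_mx11 !mxE /= expr0 expr1; ring.
Qed.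

Lemma inv_mx22 a b c d : a * d - b * c = 1 -> (mx22 a b c d)^-1 = mx22 d (- b) (- c) a.
Proof.
move=> det1; have unitM : mx22 a b c d \is a GRing.unit by rewrite unitmxE det_mx22 det1 unitr1.
apply: (mulrI unitM); rewrite mulrV // mul_mx22 -mx22_1.
by rewrite -det1; congr mx22; ring.
Qed.

End Matrix22.

Lemma mxAE : mxA = mx22 1 2 0 1.
Proof. by apply: eq_mx22; rewrite mxE. Qed.

Lemma mxBE : mxB = mx22 1 0 2 1.
Proof. by apply: eq_mx22; rewrite mxE. Qed.

Lemma expz_upper (t k : int) : mx22 1 t 0 1 ^ k = mx22 1 (k * t) 0 1.
Proof.
have expn_upper (n : nat) : mx22 1 t 0 1 ^+ n = mx22 1 (n%:Z * t) 0 1.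
  elim: n => [|n IHn]; first by rewrite expr0 mul0r mx22_1.
  by rewrite exprSr IHn mul_mx22 intS; congr mx22; ring.
case: k => n; first exact: expn_upper.
by rewrite NegzE -exprnN expn_upper inv_mx22; [congr mx22 | ]; ring.
Qed.

Lemma expz_lower (t k : int) : mx22 1 0 t 1 ^ k = mx22 1 0 (k * t) 1.
Proof.
have expn_lower (n : nat) : mx22 1 0 t 1 ^+ n = mx22 1 0 (n%:Z * t) 1.
  elim: n => [|n IHn]; first by rewrite expr0 mul0r mx22_1.
  by rewrite exprSr IHn mul_mx22 intS; congr mx22; ring.
case: k => n; first exact: expn_lower.
by rewrite NegzE -exprnN expn_lower inv_mx22; [congr mx22 | ]; ring.
Qed.

Lemma expzA k : mxA ^ k = mx22 1 (2 * k) 0 1.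
Proof. by rewrite mxAE expz_upper mulrC. Qed.

Lemma expzB k : mxB ^ k = mx22 1 0 (2 * k) 1.
Proof. by rewrite mxBE expz_lower mulrC. Qed.

Lemma mxCE : mxC = mx22 21 (-8) 8 (-3).
Proof.
rewrite /mxC -!exprN1 expzA expzB mxAE mxBE !mul_mx22.
by congr mx22; ring.
Qed.

Lemma expzCN1 : mxC ^ (-1) = mx22 (-3) 8 (-8) 21.
Proof. by rewrite exprN1 mxCE inv_mx22 //; congr mx22; ring. Qed.

Lemma inGamma2_mx22 a b c d : inGamma2 (mx22 a b c d) <->
  [/\ a * d - b * c = 1, (2 %| a - 1)%Z, (2 %| b)%Z, (2 %| c)%Z & (2 %| d - 1)%Z].
Proof.
rewrite /inGamma2 det_mx22; split.
  case/andP=> /eqP det1 /forallP G2.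
  have := forallP (G2 ord0) ord0; have := forallP (G2 ord0) ord_max.
  have := forallP (G2 ord_max) ord0; have := forallP (G2 ord_max) ord_max.
  by rewrite !mxE /= !subr0.
case=> det1 *; rewrite det1 eqxx; apply/forallP=> i; apply/forallP=> j; rewrite mxE.
by case: i => [[|[|i]] Hi] //; case: j => [[|[|j]] Hj] //=; rewrite subr0.
Qed.

Lemma inGamma2_unit M : inGamma2 M -> M \is a GRing.unit.
Proof. by case/andP=> /eqP det1 _; rewrite unitmxE det1 unitr1. Qed.

Lemma inGamma2_1 : inGamma2 1.
Proof. by rewrite -mx22_1; apply/inGamma2_mx22; split; rewrite ?subrr ?dvdz0 //; ring. Qed.

Lemma inGamma2M M M' : inGamma2 M -> inGamma2 M' -> inGamma2 (M * M').
Proof.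
rewrite [M]mx22_eta [M']mx22_eta mul_mx22.
move: (M ord0 ord0) (M ord0 ord_max) (M ord_max ord0) (M ord_max ord_max).
move: (M' ord0 ord0) (M' ord0 ord_max) (M' ord_max ord0) (M' ord_max ord_max).
move=> a' b' c' d' a b c d /inGamma2_mx22[det1 a1 b0 c0 d1] /inGamma2_mx22[det1' a1' b0' c0' d1'].
apply/inGamma2_mx22; split.
- transitivity ((a * d - b * c) * (a' * d' - b' * c')); first by ring.
  by rewrite det1 det1' mulr1.
- rewrite (_ : _ - 1 = (a - 1) * a' + (a' - 1) + b * c'); last by ring.
  by apply: rpredD; first apply: rpredD; rewrite ?dvdz_mulr.
- by apply: rpredD; [apply: dvdz_mull | apply: dvdz_mulr].
- by apply: rpredD; [apply: dvdz_mulr | apply: dvdz_mull].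
- rewrite (_ : _ - 1 = c * b' + (d - 1) * d' + (d' - 1)); last by ring.
  by apply: rpredD; first apply: rpredD; rewrite ?dvdz_mulr.
Qed.

Lemma inGamma2N M : inGamma2 M -> inGamma2 (- M).
Proof.
rewrite [M]mx22_eta opp_mx22 => /inGamma2_mx22[det1 *].
by apply/inGamma2_mx22; split; [rewrite -det1; ring | lia ..].
Qed.

Lemma inGamma2V M : inGamma2 M -> inGamma2 M^-1.
Proof.
rewrite [M]mx22_eta => /inGamma2_mx22[det1 *].
by rewrite inv_mx22 //; apply/inGamma2_mx22; split; [rewrite -det1; ring | lia ..].
Qed.

Lemma inGamma2_expzA k : inGamma2 (mxA ^ k).
Proof. by rewrite expzA; apply/inGamma2_mx22; split; [ring | lia ..]. Qed.

Lemma inGamma2_expzB k : inGamma2 (mxB ^ k).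
Proof. by rewrite expzB; apply/inGamma2_mx22; split; [ring | lia ..]. Qed.

Lemma inGamma2_mxA : inGamma2 mxA.
Proof. by rewrite -[mxA]expr1z inGamma2_expzA. Qed.

Lemma inGamma2_mxB : inGamma2 mxB.
Proof. by rewrite -[mxB]expr1z inGamma2_expzB. Qed.

Lemma Gamma2_subgroup : unit_subgroup inGamma2.
Proof.
by split; [exact: inGamma2_1 | exact: inGamma2M | exact: inGamma2V | exact: inGamma2_unit].
Qed.

Lemma conj_expzAB i j x :
  mxA ^ i * mxB ^ j * x * mxB ^ (- j) * mxA ^ (- i) =
  (mxA ^ i * mxB ^ j) * x * (mxA ^ i * mxB ^ j)^-1.
Proof.
by rewrite invrM ?inGamma2_unit ?inGamma2_expzA ?inGamma2_expzB // !invr_expz !mulrA.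
Qed.

Inductive letter := LA | LAi | LB | LBi.

Definition letter_mx (l : letter) : 'M[int]_2 :=
  match l with LA => mxA | LAi => mxA^-1 | LB => mxB | LBi => mxB^-1 end.

Definition evalw (w : seq letter) : 'M[int]_2 := \prod_(l <- w) letter_mx l.

Definition pm_word (M : 'M[int]_2) := exists w, M = evalw w \/ M = - evalw w.

Lemma pm_wordN M : pm_word M -> pm_word (- M).
Proof. by case=> w [->|->]; exists w; rewrite ?opprK; [right | left]. Qed.

Lemma evalw_cat w w' : evalw (w ++ w') = evalw w * evalw w'.
Proof. exact: big_cat. Qed.

Lemma pm_word_mul_evalw w M : pm_word M -> pm_word (evalw w * M).
Proof.
case=> w' EM; exists (w ++ w'); rewrite evalw_cat.
by case: EM => ->; [left | right; rewrite mulrN].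
Qed.

Lemma evalw_nseq l n : evalw (nseq n l) = letter_mx l ^+ n.
Proof. by rewrite /evalw big_nseq; elim: n => //= n ->; rewrite exprS. Qed.

Lemma evalw_expz (x : 'M[int]_2) l l' k :
  letter_mx l = x -> letter_mx l' = x^-1 -> exists w, x ^ k = evalw w.
Proof.
move=> El El'; case: k => n; first by exists (nseq n l); rewrite evalw_nseq El.
by exists (nseq n.+1 l'); rewrite evalw_nseq El' exprVn.
Qed.

Lemma pm_word_mulA k M : pm_word M -> pm_word (mxA ^ k * M).
Proof. by have [w ->] := @evalw_expz mxA LA LAi k erefl erefl; apply: pm_word_mul_evalw. Qed.

Lemma pm_word_mulB k M : pm_word M -> pm_word (mxB ^ k * M).
Proof. by have [w ->] := @evalw_expz mxB LB LBi k erefl erefl; apply: pm_word_mul_evalw. Qed.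

Lemma pm_word1 : pm_word 1.
Proof. by exists [::]; left; rewrite /evalw big_nil. Qed.

Lemma mulz_eq1 (a d : int) : a * d = 1 -> (a = 1 /\ d = 1) \/ (a = -1 /\ d = -1).
Proof.
move=> ad1; have /eqP : (`|a| * `|d| = 1)%N by rewrite -abszM ad1.
by rewrite muln_eq1 => /andP[/eqP ? /eqP ?]; lia.
Qed.

Lemma pm_word_upper (a b d : int) : a * d = 1 -> (2 %| b)%Z -> pm_word (mx22 a b 0 d).
Proof.
move=> /mulz_eq1[[-> ->] | [-> ->]] /dvdzP[k ->].
  by rewrite mulrC -expzA -[_ ^ k]mulr1; apply/pm_word_mulA/pm_word1.
rewrite (_ : mx22 _ _ _ _ = - (mxA ^ (- k) * 1)); last first.
  by rewrite mulr1 expzA opp_mx22; congr mx22; ring.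
by apply/pm_wordN/pm_word_mulA/pm_word1.
Qed.

Lemma pm_word_mx22 n (a b c d : int) : `|a| + `|c| <= n%:Z -> a * d - b * c = 1 ->
  (2 %| a - 1)%Z -> (2 %| b)%Z -> (2 %| c)%Z -> pm_word (mx22 a b c d).
Proof.
elim: n a b c d => [|n IHn] a b c d le_n det1 a1 b0 c0; first lia.
have [c_eq0 | c_neq0] := eqVneq c 0.
  by rewrite c_eq0 in det1 *; apply: pm_word_upper; rewrite // -det1; ring.
have [lt_ca | lt_ac] : `|c| < `|a| \/ `|a| < `|c| by lia.
  have [e lt_e] : exists e : int, `|a - 2 * e * c| < `|a|.
    have [? | ?] : `|a - 2 * c| < `|a| \/ `|a + 2 * c| < `|a| by lia.
      by exists 1; rewrite mulr1.
    by exists (-1); rewrite mulrN1 mulNr opprK.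
  rewrite (_ : mx22 a b c d = mxA ^ e * mx22 (a - 2 * e * c) (b - 2 * e * d) c d).
    by apply/pm_word_mulA/IHn; [lia | rewrite -[RHS]det1; ring | lia ..].
  by rewrite expzA mul_mx22; congr mx22; ring.
have [e lt_e] : exists e : int, `|c - 2 * e * a| < `|c|.
  have [? | ?] : `|c - 2 * a| < `|c| \/ `|c + 2 * a| < `|c| by lia.
    by exists 1; rewrite mulr1.
  by exists (-1); rewrite mulrN1 mulNr opprK.
rewrite (_ : mx22 a b c d = mxB ^ e * mx22 a b (c - 2 * e * a) (d - 2 * e * b)).
  by apply/pm_word_mulB/IHn; [lia | rewrite -[RHS]det1; ring | lia ..].
by rewrite expzB mul_mx22; congr mx22; ring.
Qed.

Lemma pm_word_Gamma2 M : inGamma2 M -> pm_word M.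
Proof.
rewrite [M]mx22_eta => /inGamma2_mx22[det1 a1 b0 c0 _].
exact: (@pm_word_mx22 (`|M ord0 ord0| + `|M ord_max ord0|)%N _ _ _ _ _ det1).
Qed.

Lemma evalw_flatten_nseq w n : evalw (flatten (nseq n w)) = evalw w ^+ n.
Proof.
elim: n => [|n IHn]; first by rewrite expr0 /evalw big_nil.
by rewrite /= evalw_cat IHn exprS.
Qed.

(* Statistics of a word whose value is h A^a B^b with h in Phi_N: the exponents
   a = sa, b = sb, the auxiliary sa2 = a(a-1)/2 and sb2 = b(b-1)/2 (kept as
   coordinates so that the law below is polynomial), and a lift (sp1, sp2, sp3)
   of psibar(h).  Right multiplication by a letter l acts as
   [wstat_mul _ (letter_stat l)]. *)
Record wstat := WStat {
  sa : int; sb : int; sa2 : int; sb2 : int; sp1 : int; sp2 : int; sp3 : int }.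

Definition wstat0 := WStat 0 0 0 0 0 0 0.

Definition wstat_mul (s t : wstat) : wstat :=
  WStat (sa s + sa t) (sb s + sb t) (sa2 s + sa2 t + sa s * sa t) (sb2 s + sb2 t + sb s * sb t)
    (sp1 s + sp1 t + sa s * sb s * sa t - sa s * sp3 t + sb s * sa2 t)
    (sp2 s + sp2 t + sa t * sb2 s - sb s * sp3 t) (sp3 s + sp3 t - sb s * sa t).

Lemma wstat_mulA : associative wstat_mul.
Proof. by do 3!case=> ? ? ? ? ? ? ?; rewrite /wstat_mul /=; congr WStat; ring. Qed.

Lemma wstat_mul1s : left_id wstat0 wstat_mul.
Proof. by case=> *; rewrite /wstat_mul /=; congr WStat; ring. Qed.

Lemma wstat_muls1 : right_id wstat0 wstat_mul.
Proof. by case=> *; rewrite /wstat_mul /=; congr WStat; ring. Qed.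

HB.instance Definition _ :=
  Monoid.isLaw.Build wstat wstat0 wstat_mul wstat_mulA wstat_mul1s wstat_muls1.

Definition letter_stat (l : letter) : wstat :=
  match l with
  | LA => WStat 1 0 0 0 0 0 0
  | LAi => WStat (-1) 0 1 0 0 0 0
  | LB => WStat 0 1 0 0 0 0 0
  | LBi => WStat 0 (-1) 0 1 0 0 0
  end.

Definition wstat_of (w : seq letter) : wstat := \big[wstat_mul/wstat0]_(l <- w) letter_stat l.

Lemma wstat_sb2 w : 2 * sb2 (wstat_of w) = sb (wstat_of w) * (sb (wstat_of w) - 1).
Proof.
elim: w => [|l w IHw]; first by rewrite /wstat_of big_nil.
rewrite /wstat_of big_cons -/(wstat_of w); move: IHw.
by case: (wstat_of w) => a b a2 b2 p1 p2 p3 /= IH; case: l => /=; lia.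
Qed.

Definition wstat_pow (s : wstat) (n : nat) : wstat :=
  let: WStat a b a2 b2 p1 p2 p3 := s in
  let c2 := 'C(n, 2)%:Z in let c3 := 'C(n, 3)%:Z in
  WStat (n%:Z * a) (n%:Z * b) (n%:Z * a2 + c2 * a ^+ 2) (n%:Z * b2 + c2 * b ^+ 2)
    (n%:Z * p1 + c2 * (a ^+ 2 * b - a * p3 + b * a2) + c3 * (2 * a ^+ 2 * b))
    (n%:Z * p2 + c2 * (a * b2 - b * p3) + c3 * (a * b ^+ 2))
    (n%:Z * p3 + c2 * (- (a * b))).

Lemma wstat_of_flatten_nseq w n : wstat_of (flatten (nseq n w)) = wstat_pow (wstat_of w) n.
Proof.
elim: n => [|n IHn].
  by case: (wstat_of w) => *; rewrite /wstat_of big_nil /wstat0 /= !bin0n /=; congr WStat; ring.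
rewrite /= /wstat_of big_cat -!/(wstat_of _) IHn.
case: (wstat_of w) => a b a2 b2 p1 p2 p3; rewrite /= /wstat_mul /= !binS bin1 !PoszD intS.
by congr WStat; ring.
Qed.

Section Kernels.
Variables (N : nat) (phi : 'M[int]_2 -> int * int) (psi : 'M[int]_2 -> int * int * int).
Hypotheses (Hphi : is_phi N phi) (Hpsi : is_psibar N phi psi).
Local Notation N' := (Nprime N).
Local Notation N'' := (Nsecond N).
Local Notation Phi := (inPhi N phi).

Lemma phi1_hom : hom_mod inGamma2 N (fun x => (phi x).1).
Proof. by case: Hphi => phiM _ _ _ x y Gx Gy; case: (phiM x y Gx Gy). Qed.

Lemma phi2_hom : hom_mod inGamma2 N (fun x => (phi x).2).
Proof. by case: Hphi => phiM _ _ _ x y Gx Gy; case: (phiM x y Gx Gy). Qed.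

Lemma Phi_subgroup : unit_subgroup Phi.
Proof.
have G := Gamma2_subgroup; have [G1 GM GV Gunit] := G.
split.
- by split; last split; [exact: G1 | exact: (hom_mod1 G phi1_hom) | exact: (hom_mod1 G phi2_hom)].
- move=> x y [Gx [x1 x2]] [Gy [y1 y2]]; split; first exact: GM.
  by split; [apply: (hom_mod_kerM phi1_hom) | apply: (hom_mod_kerM phi2_hom)].
- move=> x [Gx [x1 x2]]; split; first exact: GV.
  by split; [apply: (hom_mod_kerV G phi1_hom) | apply: (hom_mod_kerV G phi2_hom)].
- by move=> x [/Gunit].
Qed.

Lemma PhiN x : Phi x -> Phi (- x).
Proof.
case: Hphi => _ phiN _ _ [Gx [x1 x2]]; have [Nx1 Nx2] := phiN x Gx.
by split; [exact: inGamma2N | rewrite /eqmod Nx1 Nx2].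
Qed.

Lemma PhiJ g x : inGamma2 g -> Phi x -> Phi (g * x * g^-1).
Proof.
have G := Gamma2_subgroup; have [_ GM GV _] := G.
move=> Gg [Gx [x1 x2]]; split; first exact: (GM _ _ (GM _ _ Gg Gx) (GV _ Gg)).
by split; rewrite /eqmod ?(hom_modJ G phi1_hom Gg Gx) ?(hom_modJ G phi2_hom Gg Gx).
Qed.

Lemma Phi_expzN x k : inGamma2 x -> Phi (x ^ (N%:Z * k)).
Proof.
move=> Gx; split; first exact: unit_subgroup_expz Gamma2_subgroup Gx.
have e1 := hom_mod_expz Gamma2_subgroup phi1_hom (N%:Z * k) Gx.
have e2 := hom_mod_expz Gamma2_subgroup phi2_hom (N%:Z * k) Gx.
by split; rewrite /eqmod ?e1 ?e2 -mulrA eqmod_mull.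
Qed.

Lemma Phi_mxC : Phi mxC.
Proof.
have G := Gamma2_subgroup; have [_ GM GV _] := G.
have [GA GB] := (inGamma2_mxA, inGamma2_mxB).
split; first exact: (GM _ _ (GM _ _ (GM _ _ GA GB) (GV _ GA)) (GV _ GB)).
by split; [apply: (hom_mod_commutator G phi1_hom) | apply: (hom_mod_commutator G phi2_hom)].
Qed.

Lemma Phi_conjC i j k : Phi (mxA ^ i * mxB ^ j * mxC ^ k * mxB ^ (- j) * mxA ^ (- i)).
Proof.
rewrite conj_expzAB; apply: PhiJ.
  by apply: inGamma2M; rewrite ?inGamma2_expzA ?inGamma2_expzB.
exact: unit_subgroup_expz Phi_subgroup Phi_mxC.
Qed.

Lemma psi1_hom : hom_mod Phi N' (fun x => (psi x).1.1).
Proof. by case: Hpsi => psiM _ _ _ _ x y Px Py; case: (psiM x y Px Py). Qed.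

Lemma psi2_hom : hom_mod Phi N' (fun x => (psi x).1.2).
Proof. by case: Hpsi => psiM _ _ _ _ x y Px Py; case: (psiM x y Px Py). Qed.

Lemma psi3_hom : hom_mod Phi N' (fun x => (psi x).2).
Proof. by case: Hpsi => psiM _ _ _ _ x y Px Py; case: (psiM x y Px Py). Qed.

Definition psiv x u v w := eqmod3 N' (psi x) (u, v, w).

Lemma psivM x y u v w u' v' w' : Phi x -> Phi y -> psiv x u v w -> psiv y u' v' w' ->
  psiv (x * y) (u + u') (v + v') (w + w').
Proof.
move=> Px Py [xu xv xw] [yu yv yw]; split; rewrite /eqmod /=.
- by rewrite (psi1_hom Px Py) (eqmodD xu yu).
- by rewrite (psi2_hom Px Py) (eqmodD xv yv).
- by rewrite (psi3_hom Px Py) (eqmodD xw yw).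
Qed.

Lemma psiv1 : psiv 1 0 0 0.
Proof.
have P := Phi_subgroup.
by split; [apply: (hom_mod1 P psi1_hom) | apply: (hom_mod1 P psi2_hom)
          | apply: (hom_mod1 P psi3_hom)].
Qed.

Lemma psivV x u v w : Phi x -> psiv x u v w -> psiv x^-1 (- u) (- v) (- w).
Proof.
have P := Phi_subgroup; move=> Px [xu xv xw]; split; rewrite /eqmod /=.
- by rewrite (hom_modV P psi1_hom Px) (eqmodN xu).
- by rewrite (hom_modV P psi2_hom Px) (eqmodN xv).
- by rewrite (hom_modV P psi3_hom Px) (eqmodN xw).
Qed.

Lemma psiv_expzN x k : inGamma2 x -> psiv (x ^+ N) 0 0 0 -> psiv (x ^ (N%:Z * k)) 0 0 0.
Proof.
move=> Gx [x1 x2 x3]; have P := Phi_subgroup.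
have PxN : Phi (x ^ N%:Z) by rewrite -[N%:Z]mulr1; apply: Phi_expzN.
rewrite -exprz_exp; split; rewrite /eqmod /=.
- by rewrite (hom_mod_expz P psi1_hom k PxN) (eqmodMl _ x1) mulr0.
- by rewrite (hom_mod_expz P psi2_hom k PxN) (eqmodMl _ x2) mulr0.
- by rewrite (hom_mod_expz P psi3_hom k PxN) (eqmodMl _ x3) mulr0.
Qed.

Lemma psiv_conjC i j k :
  psiv (mxA ^ i * mxB ^ j * mxC ^ k * mxB ^ (- j) * mxA ^ (- i)) (- (i * k)) (- (j * k)) k.
Proof. by case: Hpsi => _ _ _ _ psiC; apply: psiC. Qed.

Lemma psiv_eq x u v w u' v' w' :
  u = u' -> v = v' -> w = w' -> psiv x u v w -> psiv x u' v' w'.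
Proof. by move=> <- <- <-. Qed.

(* [h A^a B^b A = h (moveA a b) A^(a+1) B^b] *)
Definition moveA a b := mxA ^ a * mxB ^ b * mxA * mxB ^ (- b) * mxA ^ (- a - 1).

Lemma Phi_psiv_moveA a b f :
  2 * f = b * (b - 1) -> Phi (moveA a b) /\ psiv (moveA a b) (a * b) f (- b).
Proof.
have [P1 PM PV _] := Phi_subgroup.
have moveA0 : moveA a 0 = 1.
  by rewrite /moveA !expzA !expzB mxAE !mul_mx22 -mx22_1; congr mx22; ring.
have moveAS b' : moveA a (b' + 1) =
    mxA ^ a * mxB ^ b' * mxC ^ (-1) * mxB ^ (- b') * mxA ^ (- a) * moveA a b'.
  by rewrite /moveA !expzA !expzB expzCN1 mxAE !mul_mx22; congr mx22; ring.
elim/int_rec: b f => [|n IHn|n IHn] f f2.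
- by rewrite moveA0 (_ : f = 0) ?mulr0 ?oppr0; [split; [exact: P1 | exact: psiv1] | lia].
- have [Pn Hn] := IHn (f - n%:Z) ltac:(lia).
  rewrite -addn1 PoszD moveAS; split; first exact: PM (Phi_conjC _ _ _) Pn.
  by apply: psiv_eq (psivM (Phi_conjC _ _ _) Pn (psiv_conjC _ _ _) Hn); ring.
- have [Pn Hn] := IHn (f - n.+1%:Z) ltac:(lia).
  have moveAN : moveA a (- n.+1%:Z) =
      mxA ^ a * mxB ^ (- n.+1%:Z) * mxC ^ 1 * mxB ^ (- - n.+1%:Z) * mxA ^ (- a) * moveA a (- n%:Z).
    by rewrite /moveA !expzA !expzB expr1z mxCE mxAE !mul_mx22 intS; congr mx22; ring.
  rewrite moveAN; split; first exact: PM (Phi_conjC _ _ _) Pn.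
  by apply: psiv_eq (psivM (Phi_conjC _ _ _) Pn (psiv_conjC _ _ _) Hn); rewrite ?intS; ring.
Qed.

Definition normal_form (M : 'M[int]_2) (s : wstat) :=
  exists2 h, Phi h & M = h * mxA ^ sa s * mxB ^ sb s /\ psiv h (sp1 s) (sp2 s) (sp3 s).

Lemma normal_form_evalw w : normal_form (evalw w) (wstat_of w).
Proof.
have [P1 PM PV Punit] := Phi_subgroup.
elim/last_ind: w => [|w l [h Ph [EM Hh]]].
  exists 1 => //; rewrite /evalw /wstat_of !big_nil /= !expr0z !mulr1.
  by split=> //; exact: psiv1.
rewrite /evalw /wstat_of -cats1 !big_cat !big_seq1 -/(evalw w) -/(wstat_of w) EM.
have b2E := wstat_sb2 w; move: (wstat_of w) EM Hh b2E => [a b a2 b2 p1 p2 p3] /= _ Hh b2E.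
rewrite /= /wstat_mul /normal_form; case: l => /=.
- have [PmA HmA] := Phi_psiv_moveA a b2E.
  exists (h * moveA a b); first exact: PM.
  split; last by apply: psiv_eq (psivM Ph PmA Hh HmA); ring.
  rewrite -!mulrA; congr (h * _); rewrite /moveA !expzA !expzB mxAE !mul_mx22.
  by congr mx22; ring.
- have [PmA HmA] := Phi_psiv_moveA (a - 1) b2E.
  exists (h * (moveA (a - 1) b)^-1); first by apply: PM; last exact: PV.
  split; last by apply: psiv_eq (psivM Ph (PV _ PmA) Hh (psivV PmA HmA)); ring.
  rewrite -!mulrA; congr (h * _); apply: (mulrI (Punit _ PmA)).
  rewrite !mulrA mulrV ?Punit // mul1r /moveA !expzA !expzB -exprN1 expzA mxAE !mul_mx22.
  by congr mx22; ring.
- exists h => //; split; last by apply: psiv_eq Hh; ring.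
  by rewrite -!mulrA !expzA !expzB mxBE !mul_mx22; congr (h * mx22 _ _ _ _); ring.
- exists h => //; split; last by apply: psiv_eq Hh; ring.
  by rewrite -!mulrA -exprN1 !expzA !expzB !mul_mx22; congr (h * mx22 _ _ _ _); ring.
Qed.

Lemma inPhi2_psiv x u v w : Phi x -> psiv x u v w ->
  (N''%:Z %| u)%Z -> (N''%:Z %| v)%Z -> (N'%:Z %| w)%Z -> inPhi2 N phi psi x.
Proof.
move=> Px [xu xv xw] du dv dw; split=> //; rewrite /eqmod.
- by rewrite (eqmod_dvd (Nsecond_dvd N) xu); apply: eqmod0.
- by rewrite (eqmod_dvd (Nsecond_dvd N) xv); apply: eqmod0.
- by rewrite xw; apply: eqmod0.
Qed.

Lemma inPhi2N x : inPhi2 N phi psi x -> inPhi2 N phi psi (- x).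
Proof.
case: Hpsi => _ psiN _ _ _ [Px x1 x2 x3]; have [Nx1 Nx2 Nx3] := psiN x Px.
split; [exact: PhiN | | | by rewrite /eqmod Nx3].
- by rewrite /eqmod (eqmod_dvd (Nsecond_dvd N) Nx1).
- by rewrite /eqmod (eqmod_dvd (Nsecond_dvd N) Nx2).
Qed.

Lemma inPhi2_evalw_pow w : inPhi2 N phi psi (evalw w ^+ N).
Proof.
have [_ PM _ _] := Phi_subgroup.
have [_ _ psiAN psiBN _] := Hpsi.
rewrite -evalw_flatten_nseq; have [h Ph [-> Hh]] := normal_form_evalw (flatten (nseq N w)).
rewrite wstat_of_flatten_nseq in Hh *; move: (wstat_of w) Hh => [a b a2 b2 p1 p2 p3] /= Hh.
have [PA PB] := (Phi_expzN a inGamma2_mxA, Phi_expzN b inGamma2_mxB).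
have PhA := PM _ _ Ph PA.
have HhAB := psivM PhA PB (psivM Ph PA Hh (psiv_expzN a inGamma2_mxA psiAN))
  (psiv_expzN b inGamma2_mxB psiBN).
rewrite !addr0 in HhAB; apply: (inPhi2_psiv (PM _ _ PhA PB) HhAB).
- exact: dvdz_bin3_comb (Nsecond_dvdN N) (Nsecond_dvd_bin2 N) (Nsecond_dvd_bin3 N).
- exact: dvdz_bin3_comb (Nsecond_dvdN N) (Nsecond_dvd_bin2 N) (Nsecond_dvd_bin3 N).
- exact: dvdz_bin2_comb (Nprime_dvd N) (Nprime_dvd_bin2 N).
Qed.

End Kernels.

Theorem proposition10 (N : nat) (phi : 'M[int]_2 -> int * int)
    (psi : 'M[int]_2 -> int * int * int) :
  (1 <= N)%N -> is_phi N phi -> is_psibar N phi psi ->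
  forall gamma : 'M[int]_2, inGamma2 gamma -> inPhi2 N phi psi (gamma ^+ N).
Proof.
move=> _ Hphi Hpsi gamma /pm_word_Gamma2[w [-> | ->]]; first exact: inPhi2_evalw_pow.
rewrite exprNn -signr_odd; case: (odd N); rewrite ?expr1 ?mulN1r ?expr0 ?mul1r.
  exact: inPhi2N (inPhi2_evalw_pow Hphi Hpsi w).
exact: inPhi2_evalw_pow.
Qed.
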